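(* Let $E$ be a finite set, $\mathcal{F}\subseteq 2^E$ a downward-closed family, and $f:\mathbb{R}_{\ge0}^{|E|}\to\mathbb{R}$, $f(\boldsymbol{w})=\max_{S\in\mathcal{F}}\sum_{e\in S}w_e$. Then: (1) $f$ is $1$-Lipschitz: $|f(\boldsymbol{u})-f(\boldsymbol{v})|\le\|\boldsymbol{u}-\boldsymbol{v}\|_1$ for all $\boldsymbol{u},\boldsymbol{v}\in\mathbb{R}_{\ge0}^{|E|}$; (2) $f$ is monotone: if $\boldsymbol{u}\ge\boldsymbol{v}$ coordinate-wise then $f(\boldsymbol{u})\ge f(\boldsymbol{v})$; (3) for every $\tau>0$, the function $f/\tau$ restricted to the domain $[0,\tau]^{|E|}$ is self-bounding.
   Context: A function $g:\mathcal{X}\to\mathbb{R}$ on a product space $\mathcal{X}=\mathcal{X}_1\times\dots\times\mathcal{X}_n$ is self-bounding if there exist functions $g_i:\mathcal{X}^{(i)}\to\mathbb{R}$, $i\in[n]$, where $\mathcal{X}^{(i)}$ is the product of all factors except the $i$-th and $\boldsymbol{x}^{(i)}=(x_1,\dots,x_{i-1},x_{i+1},\dots,x_n)$, such that for all $\boldsymbol{x}\in\mathcal{X}$: $0\le g(\boldsymbol{x})-g_i(\boldsymbol{x}^{(i)})\le1$ for every $i$, and $\sum_{i\in[n]}\big(g(\boldsymbol{x})-g_i(\boldsymbol{x}^{(i)})\big)\le g(\boldsymbol{x})$. A family $\mathcal{F}$ is downward-closed if $S\in\mathcal{F}$ and $T\subseteq S$ imply $T\in\mathcal{F}$. *)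

From mathcomp Require Import all_boot all_order all_algebra.
Set Implicit Arguments. Unset Strict Implicit. Unset Printing Implicit Defensive.
Import Order.TTheory GRing.Theory Num.Theory.
Local Open Scope ring_scope.

Definition downward_closed (E : finType) (F : {set {set E}}) : Prop :=
  forall S T : {set E}, S \in F -> T \subset S -> T \in F.

(* f(w) = max_{S in F} sum_{e in S} w_e.  The big max uses default 0; when
   set0 \in F and w >= 0 this is exactly the maximum over F. *)
Definition maxweight (R : realFieldType) (E : finType) (F : {set {set E}})
    (w : E -> R) : R :=
  \big[Num.max/0]_(S in F) \sum_(e in S) w e.

(* Self-bounding on the product space X = prod_i X_i, X_i = [x in D i].
   A function g_i on X^(i) is encoded as a function gi i on X whose value
   depends only on the coordinates other than i (for points of X). *)
Definition self_bounding (R : realFieldType) (E : finType) (D : E -> R -> Prop)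
    (g : (E -> R) -> R) : Prop :=
  exists gi : E -> (E -> R) -> R,
    (forall (i : E) (x y : E -> R), (forall j, D j (x j)) -> (forall j, D j (y j)) ->
        (forall j, j != i -> x j = y j) -> gi i x = gi i y) /\
    (forall x : E -> R, (forall j, D j (x j)) ->
        (forall i, 0 <= g x - gi i x <= 1) /\
        \sum_(i : E) (g x - gi i x) <= g x).

From mathcomp Require Import all_boot all_order all_algebra.
Import Order.TTheory GRing.Theory Num.Theory.
Local Open Scope ring_scope.
Set Implicit Arguments. Unset Strict Implicit.

(* Each member [S] of [F] is a competitor: its weight moves by at most the
   l1 distance, which gives the Lipschitz bound.  For self-bounding take
   [g_i w] to be the maximum with coordinate [i] set to 0.  A maximiser [S] for
   [w] stays feasible and loses the weight [w i] if [i \in S], nothing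
   otherwise; so the drops [f w - g_i w] are at most [w i <= tau] and sum to at
   most the weight of [S], which is [f w]. *)

Definition zero_at (E : finType) (R : realFieldType) (i : E) (w : E -> R) :
    E -> R :=
  fun e => if e == i then 0 else w e.

Section MaxWeight.
Variables (R : realFieldType) (E : finType) (F : {set {set E}}).
Implicit Types (u v w : E -> R) (S : {set E}).

Lemma maxweight_ge0 w : 0 <= maxweight F w.
Proof. exact: bigmax_ge_id. Qed.

Lemma maxweight_ge_sum w S : S \in F -> \sum_(e in S) w e <= maxweight F w.
Proof. by move=> SF; apply: le_bigmax_cond. Qed.

Lemma maxweight_le w (m : R) : 0 <= m ->
  (forall S, S \in F -> \sum_(e in S) w e <= m) -> maxweight F w <= m.
Proof. exact: bigmax_le. Qed.

Lemma eq_maxweight u v : u =1 v -> maxweight F u = maxweight F v.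
Proof. by move=> uv; apply: eq_bigr => S _; apply: eq_bigr => e _. Qed.

Lemma maxweight_attained w S0 : S0 \in F -> (forall e, 0 <= w e) ->
  exists2 S, S \in F & maxweight F w = \sum_(e in S) w e.
Proof.
move=> S0F w_ge0.
have [S SF wS] := eq_bigmax S0 _ (fun S => \sum_(e in S) w e) S0F
  (fun S _ => sumr_ge0 _ (fun e _ => w_ge0 e)).
by exists S.
Qed.

Lemma le_maxweight u v : (forall e, v e <= u e) -> maxweight F v <= maxweight F u.
Proof.
move=> vu; apply: maxweight_le => [|S SF]; first exact: maxweight_ge0.
by apply: le_trans (maxweight_ge_sum u SF); apply: ler_sum.
Qed.

Lemma maxweight_subr_le u v :
  maxweight F u - maxweight F v <= \sum_e `|u e - v e|.
Proof.
rewrite lerBlDl; apply: maxweight_le => [|S SF].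
  by rewrite addr_ge0 ?maxweight_ge0 ?sumr_ge0.
have sumS_le : \sum_(e in S) (u e - v e) <= \sum_e `|u e - v e|.
  rewrite [X in _ <= X](bigID (mem S)) /= -[X in X <= _]addr0.
  by rewrite lerD ?sumr_ge0 // ler_sum // => e _; apply: ler_norm.
rewrite -lerBlDl; apply: le_trans sumS_le; rewrite sumrB.
by rewrite lerD2l lerN2 maxweight_ge_sum.
Qed.

Lemma maxweight_lipschitz u v :
  `|maxweight F u - maxweight F v| <= \sum_e `|u e - v e|.
Proof.
rewrite ler_norml maxweight_subr_le andbT lerNl opprB.
by under eq_bigr => e _ do rewrite distrC; apply: maxweight_subr_le.
Qed.

Lemma maxweight_zero_at_le w i :
  0 <= w i -> maxweight F (zero_at i w) <= maxweight F w.
Proof. by move=> wi_ge0; apply: le_maxweight => e; rewrite /zero_at; case: eqP => [->|]. Qed.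

Lemma sumr_sub_zero_at w S i :
  \sum_(e in S) (w e - zero_at i w e) = if i \in S then w i else 0.
Proof.
have [iS|iNS] := boolP (i \in S).
  rewrite (bigD1 i) //= big1 => [|e /andP[_ /negPf ei]]; rewrite /zero_at ?eqxx ?ei.
    by rewrite subr0 addr0.
  by rewrite subrr.
apply: big1 => e eS; rewrite /zero_at; case: eqP => [ei|_]; last exact: subrr.
by rewrite -ei eS in iNS.
Qed.

Lemma maxweight_subr_zero_at_le w S i : S \in F ->
  maxweight F w = \sum_(e in S) w e ->
  maxweight F w - maxweight F (zero_at i w) <= (if i \in S then w i else 0).
Proof.
move=> SF wS; rewrite -sumr_sub_zero_at sumrB wS lerD2l lerN2.
exact: maxweight_ge_sum.
Qed.

Lemma maxweight_self_bounding S0 (tau : R) : S0 \in F -> 0 < tau ->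
  self_bounding (fun _ t => 0 <= t <= tau) (fun w => maxweight F w / tau).
Proof.
move=> S0F tau_gt0.
exists (fun i w => maxweight F (zero_at i w) / tau); split.
  move=> i x y _ _ xy; congr (_ / _); apply: eq_maxweight => e.
  by rewrite /zero_at; case: eqP => // /eqP /xy.
move=> w w_box.
have w_ge0 e : 0 <= w e by case/andP: (w_box e).
have [S SF wS] := maxweight_attained S0F w_ge0.
have drop_le i := maxweight_subr_zero_at_le i SF wS.
split=> [i|].
  rewrite -mulrBl divr_ge0 ?subr_ge0 ?maxweight_zero_at_le ?(ltW tau_gt0) //=.
  rewrite ler_pdivrMr // mul1r; apply: le_trans (drop_le i) _.
  by case: ifP => _; [case/andP: (w_box i) | exact: ltW].
under eq_bigr do rewrite -mulrBl.
rewrite -mulr_suml ler_wpM2r ?invr_ge0 ?(ltW tau_gt0) //.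
by apply: le_trans (ler_sum _ (fun i _ => drop_le i)) _; rewrite -big_mkcond wS.
Qed.

End MaxWeight.

Theorem proposition1 (R : realFieldType) (E : finType) (F : {set {set E}})
    (hF0 : set0 \in F) (hF : downward_closed F) :
  (forall u v : E -> R, (forall e, 0 <= u e) -> (forall e, 0 <= v e) ->
     `|maxweight F u - maxweight F v| <= \sum_(e : E) `|u e - v e|) /\
  (forall u v : E -> R, (forall e, 0 <= v e) -> (forall e, v e <= u e) ->
     maxweight F v <= maxweight F u) /\
  (forall tau : R, 0 < tau ->
     self_bounding (fun (_ : E) (t : R) => 0 <= t <= tau)
                   (fun w => maxweight F w / tau)).
Proof.
split; first by move=> u v _ _; apply: maxweight_lipschitz.
split; first by move=> u v _; apply: le_maxweight.
by move=> tau; apply: maxweight_self_bounding hF0.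
Qed.
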